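(* Let $\tau=\infty$ and let $(V,\mathcal{E})$ be the lookdown representation based on $(X_n)$, $(k_n)$. Suppose (i) $\#\{i:k_n(i)=0\}\le1$ for each $n$, and (ii) fixation occurs almost surely. Then $\rho(v)=1$ for every $v\in V$.
   Context: Data: $\tau=\infty$, positive integers $(X_n)_{n\ge0}$, vectors $k_n=(k_n(i))_{i=1}^{X_n}$ of nonnegative integers with $\sum_ik_n(i)=X_{n+1}$. $V_n=\{(n,i):1\le i\le X_n\}$, $V=\bigcup_nV_n$. Lookdown representation: for each $n$ fix a partition $\xi_n$ of $\{1,\dots,X_{n+1}\}$ whose block sizes are the nonzero entries of $k_n$; let $(\sigma_n)$ be independent uniform random permutations of $\{1,\dots,X_{n+1}\}$; let $\Xi_n=\{\sigma_n(A):A\in\xi_n\}$ with blocks listed in increasing order of least element as $B_1,\dots,B_{\ell_n}$; $\mathcal{E}_n=\bigcup_i\{((n,i),(n+1,j)):j\in B_i\}$, $\mathcal{E}=\bigcup_n\mathcal{E}_n$. For $v\in V_n$, $m\ge n$, $D_m(v)$ is the set of vertices of $V_m$ reachable from $v$ by a directed path in $\mathcal{E}$. Fixation means: for each $n$ there is $m>n$ such that $D_m(v)=\emptyset$ for all but one $v\in V_n$ (equivalently, when $\tau=\infty$, the graph has a unique infinite directed path from generation $0$). Identification probability: $\mathcal{P}$ = permutations of $V$ preserving each $V_n$; $\sigma\in\mathcal{P}$ uniform means its restrictions to the $V_n$ are independent uniform permutations; $\sigma(E)=\{(\sigma(v),\sigma(w)):(v,w)\in E\}$. With $\sigma$ uniform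 independent of $\mathcal{E}$, for $v\in V_n$, $\rho(v)=\mathbb{E}[\max_{w\in V_n}\mathbb{P}(\sigma(v)=w\mid\sigma(\mathcal{E}))]$. *)

From HB Require Import structures.
From mathcomp Require Import all_boot all_order all_algebra all_fingroup.
From mathcomp Require Import all_classical all_reals all_analysis.
Set Implicit Arguments. Unset Strict Implicit. Unset Printing Implicit Defensive.
Import Order.TTheory GRing.Theory Num.Theory.

(* Conventions: generation n has vertices (n,i), i : 'I_(X n)
   (0-indexed version of 1..X_n).  *)

Section Lookdown.
Variable X : nat -> nat.

Definition Xi (n : nat) (xi : {set {set 'I_(X n.+1)}}) (s : {perm 'I_(X n.+1)})
  : {set {set 'I_(X n.+1)}} := (fun A : {set 'I_(X n.+1)} => s @: A) @: xi.

(* Rank (0-indexed) of the block of Xi_n containing j, when the blocks of Xi_n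
   are listed in increasing order of their least element: the number of blocks
   whose least element is smaller than the least element of the block of j. *)
Definition block_rank (n : nat) (xi : {set {set 'I_(X n.+1)}})
  (s : {perm 'I_(X n.+1)}) (j : 'I_(X n.+1)) : nat :=
  #|[set B in Xi xi s |
      [exists x in B, [forall y in finset.pblock (Xi xi s) j, x < y]]]|.

(* edge set E_n : ((n,i),(n+1,j)) in E_n iff j lies in B_i (the i-th block) *)
Definition ld_edge (n : nat) (xi : {set {set 'I_(X n.+1)}})
  (s : {perm 'I_(X n.+1)}) (i : 'I_(X n)) (j : 'I_(X n.+1)) : bool :=
  val i == block_rank xi s j.

Fixpoint desc (E : forall m, 'I_(X m) -> 'I_(X m.+1) -> bool)
  (n : nat) (i : 'I_(X n)) (d : nat) : {set 'I_(X (d + n))} :=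
  match d return {set 'I_(X (d + n))} with
  | 0 => [set i]
  | d'.+1 => [set j : 'I_(X (d'.+1 + n)) |
              [exists u in desc E i d', E (d' + n) u j]]
  end.

Definition fixation (E : forall m, 'I_(X m) -> 'I_(X m.+1) -> bool) : Prop :=
  forall n, exists d, 0 < d /\
    exists v : 'I_(X n), forall u : 'I_(X n), u != v -> desc E u d = finset.set0.

Definition perm_edge (E : forall m, 'I_(X m) -> 'I_(X m.+1) -> bool)
  (tau : forall m, {perm 'I_(X m)}) (n : nat) (a : 'I_(X n)) (b : 'I_(X n.+1))
  : bool := E n ((tau n)^-1%g a) ((tau n.+1)^-1%g b).

End Lookdown.

Section CondProb.
Local Open Scope classical_set_scope.
Local Open Scope ring_scope.
Definition cond_prob_version d (T : measurableType d) (R : realType)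
  (P : probability T R) (G : set (set T)) (A : set T) (f : T -> R) : Prop :=
  (forall U : set R, measurable U -> G (f @^-1` U)) /\
  P.-integrable setT (EFin \o f) /\
  (forall B, G B -> (\int[P]_(x in B) (f x)%:E = P (A `&` B))%E).
End CondProb.

From HB Require Import structures.
From mathcomp Require Import all_boot all_order all_algebra all_fingroup.
From mathcomp Require Import all_classical all_reals all_analysis.
From mathcomp Require Import measurable_realfun zify.
Import Order.TTheory GRing.Theory Num.Theory.
Set Implicit Arguments. Unset Strict Implicit.

(* In generation n, vertex a < #|Xi_n| is the parent of the block of index a
   (blocks ordered by least element) and, by (i), the only other possible
   vertex is childless.  So the order of generation n is visible from
   generation n+1: a < a' iff a has children and either a' has none or some
   child of a lies below all children of a'.  Iterating, the relabelled graph
   sigma(E) alone certifies a < a' from generations n..n+d as soon as one of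
   a, a' has no descendant at depth d.  On fixation all but one vertex of
   generation n die out, so sigma(E) determines the original index of every
   label: the event B_v "the vertex labelled v is ranked i" lies in G and
   agrees almost surely with A_v = {sigma(n,i) = v}.  Hence 1_(B_v) is a
   version of P(A_v | G), every version equals it a.s., and the maximum over
   v of any versions is a.s. 1. *)

Section BlockOrder.
Variables (X : nat -> nat) (n : nat) (xi : {set {set 'I_(X n.+1)}})
  (s : {perm 'I_(X n.+1)}).
Hypothesis xi_part : finset.partition xi [set: 'I_(X n.+1)].
Local Notation blocks := (Xi xi s).

Lemma block_neq0 B : B \in blocks -> B != finset.set0.
Proof.
case/imsetP=> A Axi ->; rewrite imset_eq0.
by apply: contraTneq Axi => ->; case/and3P: xi_part.
Qed.

Lemma blocks_cover j : exists2 B, B \in blocks & j \in B.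
Proof.
case/and3P: xi_part => /eqP cov _ _.
have : (s^-1)%g j \in finset.cover xi by rewrite cov inE.
case/bigcupP=> A Axi jA; exists (s @: A); first exact: imset_f.
by apply/imsetP; exists ((s^-1)%g j) => //; rewrite permKV.
Qed.

Lemma blocks_disjoint B B' j :
  B \in blocks -> B' \in blocks -> j \in B -> j \in B' -> B = B'.
Proof.
case/and3P: xi_part => _ triv _.
case/imsetP=> A Axi -> /imsetP[A' A'xi ->].
case/imsetP=> x xA -> /imsetP[x' x'A /perm_inj xx]; subst x'; congr (_ @: _).
by rewrite -(def_pblock triv Axi xA) (def_pblock triv A'xi x'A).
Qed.

Lemma pblock_blocks B j : B \in blocks -> j \in B -> finset.pblock blocks j = B.
Proof.
move=> BX jB; rewrite /finset.pblock; case: pickP => [B' /andP[B'X jB']|/(_ B)].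
  exact: blocks_disjoint B'X BX jB' jB.
by rewrite /= BX jB.
Qed.

Definition starts_before (B B' : {set 'I_(X n.+1)}) : bool :=
  [exists x in B, [forall y in B', x < y]].

Definition block_index (B : {set 'I_(X n.+1)}) : nat :=
  #|[set B' in blocks | starts_before B' B]|.

Lemma block_rankE j : block_rank xi s j = block_index (finset.pblock blocks j).
Proof. by []. Qed.

Lemma starts_before_irr B : B != finset.set0 -> ~~ starts_before B B.
Proof.
case/finset.set0Pn=> x0 x0B; apply/existsP => -[x /andP[xB /forallP /(_ x)]].
by rewrite xB ltnn.
Qed.

Lemma starts_before_trans B1 B2 B3 :
  starts_before B1 B2 -> starts_before B2 B3 -> starts_before B1 B3.
Proof.
case/existsP=> x /andP[xB1 /forallP lt_x] /existsP[y /andP[yB2 /forallP lt_y]].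
apply/existsP; exists x; rewrite xB1; apply/forallP => z; apply/implyP => zB3.
by apply: (ltn_trans (implyP (lt_x y) yB2)); exact: implyP (lt_y z) zB3.
Qed.

Lemma starts_before_asym B B' : starts_before B B' -> ~~ starts_before B' B.
Proof.
move=> lt; apply/negP => /(starts_before_trans lt); apply/negP.
by apply: starts_before_irr; case/existsP: lt => x /andP[xB _]; apply/finset.set0Pn; exists x.
Qed.

Lemma starts_before_total B B' : B \in blocks -> B' \in blocks -> B != B' ->
  starts_before B B' || starts_before B' B.
Proof.
move=> BX B'X neqBB'.
case/finset.set0Pn: (block_neq0 BX) => x0 x0B.
case/finset.set0Pn: (block_neq0 B'X) => x1 x1B'.
case: (arg_minnP (fun x : 'I_(X n.+1) => val x) x0B) => m mB min_m.
case: (arg_minnP (fun x : 'I_(X n.+1) => val x) x1B') => m' m'B' min_m'.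
have neq_mm' : m != m'.
  by apply: contra neqBB' => /eqP eq_mm'; rewrite (blocks_disjoint BX B'X mB) ?eq_mm'.
case: (ltngtP m m') => [lt|lt|/val_inj eq]; last by rewrite eq eqxx in neq_mm'.
- apply/orP; left; apply/existsP; exists m; apply/andP; split; first exact: mB; apply/forallP => y.
  by apply/implyP => yB'; apply: leq_trans lt (min_m' y yB').
- apply/orP; right; apply/existsP; exists m'; apply/andP; split; first exact: m'B'; apply/forallP => y.
  by apply/implyP => yB; apply: leq_trans lt (min_m y yB).
Qed.

Lemma block_index_lt B B' :
  starts_before B B' -> B \in blocks -> block_index B < block_index B'.
Proof.
move=> lt BX; apply: proper_card; apply/fintype.properP; split.
  apply/fintype.subsetP => C; rewrite !inE => /andP[-> ltC] /=.
  exact: starts_before_trans ltC lt.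
exists B; first by rewrite inE BX lt.
by rewrite inE BX /= starts_before_irr // block_neq0.
Qed.

Lemma block_index_lt_card B : B \in blocks -> block_index B < #|blocks|.
Proof.
move=> BX; apply: proper_card; apply/fintype.properP; split.
  by apply/fintype.subsetP => C; rewrite inE => /andP[].
by exists B => //; rewrite inE BX /= starts_before_irr // block_neq0.
Qed.

Lemma block_index_inj B B' : B \in blocks -> B' \in blocks ->
  block_index B = block_index B' -> B = B'.
Proof.
move=> BX B'X eq_idx; apply/eqP; apply/negPn/negP => neqBB'.
case/orP: (starts_before_total BX B'X neqBB') => [lt|lt].
- by have := block_index_lt lt BX; rewrite eq_idx ltnn.
- by have := block_index_lt lt B'X; rewrite eq_idx ltnn.
Qed.

Lemma block_index_surj a : a < #|blocks| ->
  exists2 B, B \in blocks & block_index B = a.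
Proof.
move=> lt_a.
have idx_uniq : uniq [seq block_index B | B <- enum blocks].
  by rewrite map_inj_in_uniq ?enum_uniq // => B B'; rewrite !mem_enum; exact: block_index_inj.
have idx_sub : {subset [seq block_index B | B <- enum blocks] <= iota 0 #|blocks|}.
  move=> x /mapP[B]; rewrite mem_enum => BX ->.
  by rewrite mem_iota add0n block_index_lt_card.
have idx_size : size (iota 0 #|blocks|) <= size [seq block_index B | B <- enum blocks].
  by rewrite size_iota size_map cardE.
have [_ idx_eq] := uniq_min_size idx_uniq idx_sub idx_size.
have : a \in iota 0 #|blocks| by rewrite mem_iota add0n.
by rewrite -idx_eq => /mapP[B]; rewrite mem_enum => BX ->; exists B.
Qed.

Lemma ld_edge_block (a : 'I_(X n)) B j : B \in blocks -> val a = block_index B ->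
  ld_edge xi s a j = (j \in B).
Proof.
move=> BX idx_a; rewrite /ld_edge block_rankE idx_a.
case: (blocks_cover j) => B' B'X jB'; rewrite (pblock_blocks B'X jB').
apply/eqP/idP => [/(block_index_inj BX B'X) -> //|jB].
by rewrite (blocks_disjoint BX B'X jB jB').
Qed.

Lemma has_child_iff (a : 'I_(X n)) :
  [exists j, ld_edge xi s a j] = (val a < #|blocks|).
Proof.
apply/existsP/idP => [[j]|lt_a].
  rewrite /ld_edge block_rankE => /eqP ->; case: (blocks_cover j) => B BX jB.
  by rewrite (pblock_blocks BX jB) block_index_lt_card.
case: (block_index_surj lt_a) => B BX idx_B.
case/finset.set0Pn: (block_neq0 BX) => j jB; exists j.
by rewrite (ld_edge_block j BX (esym idx_B)).
Qed.

(* Among vertices with children, a < a' iff some child of a lies below all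
   children of a': the order of generation n is read off generation n+1. *)
Lemma lt_iff_first_child (a a' : 'I_(X n)) :
  val a < #|blocks| -> val a' < #|blocks| ->
  (val a < val a') =
  [exists c, ld_edge xi s a c && [forall c', ld_edge xi s a' c' ==> (c < c')]].
Proof.
move=> lt_a lt_a'.
case: (block_index_surj lt_a) => B BX idx_B.
case: (block_index_surj lt_a') => B' B'X idx_B'.
have -> : [exists c, ld_edge xi s a c && [forall c', ld_edge xi s a' c' ==> (c < c')]]
    = starts_before B B'.
  apply: eq_existsb => c; rewrite (ld_edge_block _ BX (esym idx_B)); congr (_ && _).
  by apply: eq_forallb => c'; rewrite (ld_edge_block _ B'X (esym idx_B')).
rewrite -idx_B -idx_B'.
have [<-|neqBB'] := eqVneq B B'; first by rewrite ltnn (negbTE (starts_before_irr (block_neq0 BX))).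
case/orP: (starts_before_total BX B'X neqBB') => lt.
  by rewrite lt (block_index_lt lt BX).
rewrite (negbTE (starts_before_asym lt)); apply/negbTE; rewrite -leqNgt ltnW //.
exact: block_index_lt.
Qed.

End BlockOrder.

(* Hypothesis (i) of the theorem: at most one vertex of generation n is
   childless, so the partition of generation n+1 has at least X n - 1 blocks. *)
Lemma card_blocks_lower (X : nat -> nat) n (xi : {set {set 'I_(X n.+1)}})
  (s : {perm 'I_(X n.+1)}) (k : 'I_(X n) -> nat) :
  perm_eq [seq #|A| | A : {set 'I_(X n.+1)} <- enum xi]
          [seq m <- [seq k i | i <- enum 'I_(X n)] | m != 0%N] ->
  (#|[set i : 'I_(X n) | k i == 0%N]| <= 1)%N ->
  X n <= #|Xi xi s|.+1.
Proof.
move=> sizes one_zero.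
have -> : #|Xi xi s| = #|xi| by rewrite card_imset //; apply: imset_inj; apply: perm_inj.
have -> : #|xi| = count (fun i => k i != 0%N) (enum 'I_(X n)).
  rewrite cardE -(size_map (fun A : {set 'I_(X n.+1)} => #|A|) (enum xi)) (perm_size sizes).
  by rewrite size_filter count_map.
have : #|[set i : 'I_(X n) | k i == 0%N]| = count (fun i => k i == 0%N) (enum 'I_(X n)).
  by rewrite cardsE cardE enumT -size_filter -deprecated_filter_index_enum.
have := count_predC (fun i => k i == 0%N) (enum 'I_(X n)).
have -> : count (predC (fun i => k i == 0%N)) (enum 'I_(X n))
  = count (fun i => k i != 0%N) (enum 'I_(X n)) by [].
rewrite size_enum_ord; lia.
Qed.

Lemma card_ord_below N (v : 'I_N) : #|[set a : 'I_N | val a < val v]| = val v.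
Proof.
have -> : #|[set a : 'I_N | val a < val v]| = count (fun a : 'I_N => val a < val v) (enum 'I_N).
  by rewrite cardsE cardE enumT -size_filter -deprecated_filter_index_enum.
rewrite -(count_map val (fun i => i < val v)) val_enum_ord.
by rewrite -size_filter (filter_iota_ltn 0 (ltnW (ltn_ord v))) size_iota.
Qed.

Section GraphInvariants.
Variable X : nat -> nat.

Definition edge_family : Type := forall m, 'I_(X m) -> 'I_(X m.+1) -> bool.

Fixpoint alive (E : edge_family) (d : nat) : forall n, 'I_(X n) -> bool :=
  match d with
  | 0 => fun _ _ => true
  | d'.+1 => fun n a => [exists c, E n a c && alive E d' c]
  end.

(* earlier E d a a' : a certificate, read off the graph alone down to depth d,
   that a precedes a': a has children and either a' has none, or some child of
   a is certified to precede every child of a'. *)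
Fixpoint earlier (E : edge_family) (d : nat) : forall n, 'I_(X n) -> 'I_(X n) -> bool :=
  match d with
  | 0 => fun _ _ _ => false
  | d'.+1 => fun n a a' => [exists c, E n a c] &&
      (~~ [exists c, E n a' c] ||
       [exists c, E n a c && [forall c', E n a' c' ==> earlier E d' c c']])
  end.

(* The number of vertices certified to precede v: the graph's guess of v's index. *)
Definition graph_rank (E : edge_family) d n (v : 'I_(X n)) : nat :=
  #|[set a | (a != v) && earlier E d a v]|.

Definition one_survivor (E : edge_family) d n : bool :=
  [exists v : 'I_(X n), [forall u, (u != v) ==> ~~ alive E d u]].

Lemma exists_swap (A B : finType) (S : {set A}) (R : A -> B -> bool) (P : B -> bool) :
  [exists j, [exists u in S, R u j] && P j] = [exists u in S, [exists j, R u j && P j]].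
Proof.
apply/existsP/existsP => [[j /andP[/existsP[u /andP[uS Ruj]] Pj]]|[u /andP[uS /existsP[j /andP[Ruj Pj]]]]].
  by exists u; rewrite uS /=; apply/existsP; exists j; rewrite Ruj.
by exists j; rewrite Pj andbT; apply/existsP; exists u; rewrite uS.
Qed.

Lemma desc_succ_exists (E : edge_family) d : forall n (a : 'I_(X n)) (P : forall m, 'I_(X m) -> bool),
  [exists u in desc E a d.+1, P _ u] =
  [exists c, E n a c && [exists u in desc E c d, P _ u]].
Proof.
elim: d => [|d IH] n a P.
  apply/existsP/existsP => [[u /andP[]]|[c /andP[Eac /existsP[u /andP[]]]]].
    rewrite inE => /existsP[x /andP[]]; rewrite inE => /eqP -> Eau Pu.
    by exists u; rewrite Eau /=; apply/existsP; exists u; rewrite inE eqxx.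
  rewrite inE => /eqP -> Pc; exists c; rewrite Pc andbT inE.
  by apply/existsP; exists a; rewrite inE eqxx.
have -> : [exists u in desc E a d.+2, P _ u] =
    [exists u in desc E a d.+1, [exists j, E _ u j && P _ j]].
  by rewrite -exists_swap; apply: eq_existsb => j; rewrite inE.
rewrite (IH n a (fun m u => [exists j, E m u j && P m.+1 j])).
apply: eq_existsb => c; congr (_ && _).
by rewrite -exists_swap; apply: eq_existsb => j; rewrite inE.
Qed.

Lemma set_neq0E (A : finType) (S : {set A}) : (S != finset.set0) = [exists u in S, true].
Proof.
apply/finset.set0Pn/existsP => [[u uS]|[u /andP[uS _]]]; first by exists u; rewrite uS.
by exists u.
Qed.

Lemma alive_desc (E : edge_family) d : forall n (a : 'I_(X n)),
  (desc E a d != finset.set0) = alive E d a.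
Proof.
elim: d => [|d IH] n a; first by apply/finset.set0Pn; exists a; rewrite inE.
rewrite set_neq0E (desc_succ_exists E d a (fun _ _ => true)) /=.
by apply: eq_existsb => c; rewrite -IH set_neq0E.
Qed.

Lemma exists_perm (A : finType) (p : {perm A}) (F : A -> bool) :
  [exists c, F ((p^-1)%g c)] = [exists c, F c].
Proof.
apply/existsP/existsP => [[c h]|[c h]]; first by exists ((p^-1)%g c).
by exists (p c); rewrite permK.
Qed.

Lemma forall_perm (A : finType) (p : {perm A}) (F : A -> bool) :
  [forall c, F ((p^-1)%g c)] = [forall c, F c].
Proof.
apply/forallP/forallP => h c; last exact: h.
by have := h (p c); rewrite permK.
Qed.

Variables (E : edge_family) (tau : forall m, {perm 'I_(X m)}).
Local Notation E' := (perm_edge E tau).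

Lemma alive_perm d : forall n (a : 'I_(X n)), alive E' d a = alive E d ((tau n)^-1%g a).
Proof.
elim: d => [//|d IH] n a /=.
by rewrite -[RHS](exists_perm (tau n.+1)); apply: eq_existsb => c; rewrite IH.
Qed.

Lemma earlier_perm d : forall n (a a' : 'I_(X n)),
  earlier E' d a a' = earlier E d ((tau n)^-1%g a) ((tau n)^-1%g a').
Proof.
elim: d => [//|d IH] n a a' /=.
congr (_ && (_ || _)).
- by rewrite -[RHS](exists_perm (tau n.+1)).
- by congr (~~ _); rewrite -[RHS](exists_perm (tau n.+1)).
rewrite -[RHS](exists_perm (tau n.+1)); apply: eq_existsb => c; congr (_ && _).
by rewrite -[RHS](forall_perm (tau n.+1)); apply: eq_forallb => c'; rewrite IH.
Qed.

Lemma graph_rank_perm d n (v : 'I_(X n)) : graph_rank E' d v = graph_rank E d ((tau n)^-1%g v).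
Proof.
rewrite /graph_rank -(card_imset _ (@perm_inj _ ((tau n)^-1)%g)).
apply: eq_card => b; rewrite [RHS]inE.
apply/imsetP/andP => [[a]|[bv lt]].
  by rewrite inE => /andP[av lt] ->; rewrite (inj_eq (@perm_inj _ _)) av -earlier_perm.
exists (tau n b); last by rewrite permK.
by rewrite inE earlier_perm permK lt andbT; apply: contra bv => /eqP <-; rewrite permK.
Qed.

Lemma one_survivor_perm d n : one_survivor E' d n = one_survivor E d n.
Proof.
rewrite /one_survivor -[RHS](exists_perm (tau n)); apply: eq_existsb => v.
rewrite -[RHS](forall_perm (tau n)); apply: eq_forallb => u.
by rewrite alive_perm (inj_eq (@perm_inj _ _)).
Qed.

End GraphInvariants.

Section Locality.
Variables (X : nat -> nat) (E1 E2 : edge_family X) (M : nat).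
Hypothesis agree : forall m, m < M -> forall a b, @E1 m a b = @E2 m a b.

Lemma alive_local d : forall n (a : 'I_(X n)), d + n <= M -> alive E1 d a = alive E2 d a.
Proof.
elim: d => [//|d IH] n a le_dM /=.
by apply: eq_existsb => c; rewrite agree ?IH //; lia.
Qed.

Lemma earlier_local d : forall n (a a' : 'I_(X n)), d + n <= M ->
  earlier E1 d a a' = earlier E2 d a a'.
Proof.
elim: d => [//|d IH] n a a' le_dM /=.
have agree_n a0 b0 : @E1 n a0 b0 = @E2 n a0 b0 by apply: agree; lia.
congr (_ && (_ || _)).
- by apply: eq_existsb => c; rewrite agree_n.
- by congr (~~ _); apply: eq_existsb => c; rewrite agree_n.
apply: eq_existsb => c; rewrite agree_n; congr (_ && _).
by apply: eq_forallb => c'; rewrite agree_n IH //; lia.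
Qed.

Lemma graph_rank_local d n (v : 'I_(X n)) : d + n <= M ->
  graph_rank E1 d v = graph_rank E2 d v.
Proof. by move=> le_dM; apply: eq_card => a; rewrite !inE earlier_local. Qed.

Lemma one_survivor_local d n : d + n <= M -> one_survivor E1 d n = one_survivor E2 d n.
Proof.
move=> le_dM; apply: eq_existsb => v; apply: eq_forallb => u.
by rewrite alive_local.
Qed.
End Locality.

Section Correctness.
Variables (X : nat -> nat) (xi : forall m, {set {set 'I_(X m.+1)}})
  (s : forall m, {perm 'I_(X m.+1)}).
Hypothesis xi_part : forall m, finset.partition (xi m) [set: 'I_(X m.+1)].
Hypothesis many_blocks : forall m, X m <= #|Xi (xi m) (s m)|.+1.
Let E : edge_family X := fun m => ld_edge (xi m) (s m).

Lemma children_not_both_alive d n (a a' : 'I_(X n)) c c' :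
  ~~ alive E d.+1 a || ~~ alive E d.+1 a' -> @E n a c -> @E n a' c' ->
  ~~ alive E d c || ~~ alive E d c'.
Proof.
move=> dead Eac Ea'c'; apply/negPn/negP => /norP[/negPn Ac /negPn Ac'].
case/orP: dead => /negP; apply; apply/existsP; [exists c | exists c']; exact/andP.
Qed.

Lemma earlier_correct d : forall n (a a' : 'I_(X n)),
  ~~ alive E d a || ~~ alive E d a' -> earlier E d a a' = (val a < val a').
Proof.
elim: d => [//|d IH] n a a' dead /=.
rewrite /E !has_child_iff //.
have bound := many_blocks n; have lt_aX := ltn_ord a; have lt_a'X := ltn_ord a'.
case: (ltnP a #|Xi (xi n) (s n)|) => lt_a; case: (ltnP a' #|Xi (xi n) (s n)|) => lt_a' /=;
  [| by apply/esym; lia | by apply/esym/negbTE; rewrite -leqNgt; lia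
   | by apply/esym/negbTE; rewrite -leqNgt; lia].
rewrite (lt_iff_first_child (xi_part n) lt_a lt_a').
apply: eq_existsb => c; apply/andP/andP => -[Eac /forallP later]; split => //;
  apply/forallP => c'; apply/implyP => Ea'c'; have := later c'; rewrite Ea'c' /=.
- by rewrite -(IH _ c c') // (children_not_both_alive dead Eac Ea'c').
- by rewrite (IH _ c c') // (children_not_both_alive dead Eac Ea'c').
Qed.

Lemma graph_rank_correct d n (v : 'I_(X n)) : one_survivor E d n -> graph_rank E d v = val v.
Proof.
case/existsP=> v0 /forallP dead.
rewrite /graph_rank -(card_ord_below v); apply: eq_card => a; rewrite !inE.
have [->|av] := eqVneq a v; first by rewrite ltnn.
rewrite /= earlier_correct //.
have [av0|av0] := eqVneq a v0; last by apply/orP; left; have := dead a; rewrite av0.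
by subst a; apply/orP; right; have := dead v; rewrite eq_sym av; exact.
Qed.

End Correctness.

Local Open Scope classical_set_scope.
Local Open Scope ring_scope.

Lemma measurable_fibre d (T : measurableType d) (K : finType) (f : T -> K) (phi : K -> bool) :
  (forall k, measurable [set w | f w = k]) -> measurable [set w | phi (f w)].
Proof.
move=> mf.
have -> : [set w | phi (f w)] = \bigcup_(k in [set k | phi k]) [set w | f w = k].
  apply/seteqP; split => w /=; first by move=> h; exists (f w).
  by case=> k /= hk ->.
by apply: fin_bigcup_measurable; [exact: finite_finset | move=> k _; exact: mf].
Qed.

Lemma measure_inter_eq d (T : measurableType d) (R : realType)
  (mu : {measure set T -> \bar R}) (A B M C : set T) :
  measurable A -> measurable B -> measurable M -> measurable C ->
  B `<=` A -> A `&` M `<=` B -> (\forall w \ae mu, M w) ->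
  mu (A `&` C) = mu (B `&` C).
Proof.
move=> mA mB mM mC BA AMB [N [mN nullN notM_N]].
have nullM : mu (~` M) = 0%E.
  apply/eqP; rewrite -measure_le0 -nullN.
  by apply: le_measure; rewrite ?inE //; exact: measurableC.
apply/eqP; rewrite eq_le; apply/andP; split; last first.
  by apply: le_measure; rewrite ?inE; [exact: measurableI | exact: measurableI | exact: setSI].
apply: (@le_trans _ _ (mu ((B `&` C) `|` ~` M))).
  apply: le_measure; rewrite ?inE; [exact: measurableI | |].
    by apply: measurableU; [exact: measurableI | exact: measurableC].
  move=> w [Aw Cw]; have [Mw|Mw] := pselect (M w); [left; split => // | by right].
  exact: AMB.
apply: le_trans (measureU2 mu (measurableI _ _ mB mC) (measurableC mM)) _.
by rewrite [X in (_ + X)%E]nullM adde0.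
Qed.

Section ConditionalProbability.
Variables (d : measure_display) (T : measurableType d) (R : realType)
  (P : probability T R) (g : set (set T)).
Hypothesis g_meas : g `<=` measurable.
Local Notation G := (<<s g>>).
Local Notation TG := (g_sigma_algebraType g).

Lemma generated_measurable A : G A -> measurable A.
Proof. by move: A; apply: smallest_sub (@sigma_algebra_measurable _ T) g_meas. Qed.

Lemma indic_cond_prob_version (A B : set T) : G B ->
  (forall C, G C -> P (A `&` C) = P (B `&` C)) ->
  cond_prob_version P G A (\1_B : T -> R).
Proof.
move=> GB AB; have mB := generated_measurable GB; split; [|split].
- move=> U _; rewrite preimage_indic.
  case: ifP => _; case: ifP => _.
  + exact: (@measurableT _ TG).
  + exact: GB.
  + exact: (@measurableC _ TG _ GB).
  + exact: (@measurable0 _ TG).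
- exact: integrable_indic.
- by move=> C GC; rewrite integral_indic ?AB //; exact: generated_measurable.
Qed.

Lemma cond_prob_version_measurable A (f : T -> R) :
  cond_prob_version P G A f -> measurable_fun [set: TG] (EFin \o f).
Proof. by case=> mf _; apply/measurable_EFinP => _ U mU; rewrite setTI; exact: mf. Qed.

Lemma cond_prob_version_measurableT A (f : T -> R) :
  cond_prob_version P G A f -> measurable_fun [set: T] (EFin \o f).
Proof.
case=> mf _; apply/measurable_EFinP => _ U mU; rewrite setTI.
exact: generated_measurable (mf U mU).
Qed.

(* Two versions of P(A | G) agree almost surely: both are G-measurable and
   have the same integral over every G-event. *)
Lemma cond_prob_version_ae_eq A (f1 f2 : T -> R) :
  cond_prob_version P G A f1 -> cond_prob_version P G A f2 ->
  ae_eq P [set: T] (EFin \o f1) (EFin \o f2).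
Proof.
move=> f1A f2A.
have mid : measurable_fun [set: T] (id : T -> TG).
  by move=> _ Y mY; rewrite setTI; exact: generated_measurable.
(* compare f1 and f2 as functions on the coarser space (T, G); the statement
   is generalized over the measurability proof of id that makes the image of
   P a measure *)
have ae_G : @ae_eq _ TG R (pushforward P (id : T -> TG)) (fun=> \bar R) setT
    (EFin \o f1 : TG -> \bar R) (EFin \o f2 : TG -> \bar R).
  move=> mid_G; apply: integral_ae_eq => //.
  - apply: (integrable_pushforward mid_G (cond_prob_version_measurable f1A)) => //.
    exact: f1A.2.1.
  - exact: cond_prob_version_measurable f2A.
  move=> C _ GC; have mC := generated_measurable GC.
  rewrite (integral_pushforward mid_G (cond_prob_version_measurable f1A)) //;
    last exact: integrableS measurableT mC (@subsetT _ _) f1A.2.1.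
  rewrite (integral_pushforward mid_G (cond_prob_version_measurable f2A)) //;
    last exact: integrableS measurableT mC (@subsetT _ _) f2A.2.1.
  by rewrite f1A.2.2 // f2A.2.2.
have [N [GN nullN sub]] := ae_G mid; exists N; split => //; exact: generated_measurable.
Qed.

End ConditionalProbability.

Lemma integral_bigmax_indic d (T : measurableType d) (R : realType) (P : probability T R)
  (I : finType) (f : I -> T -> R) (B : I -> set T) :
  (forall v, measurable_fun [set: T] (EFin \o f v)) ->
  (forall v, ae_eq P [set: T] (EFin \o f v) (EFin \o \1_(B v))) ->
  (\forall w \ae P, exists v, B v w) ->
  (\int[P]_w (\big[maxe/-oo]_(v : I) (f v w)%:E) = 1)%E.
Proof.
move=> mf f_ae someB.
have mmax (s : seq I) : measurable_fun [set: T] (fun w => \big[maxe/-oo%E]_(v <- s) (f v w)%:E).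
  elim: s => [|v s IH].
    rewrite (_ : (fun w => _) = cst -oo%E); first exact: measurable_cst.
    by apply: funext => w; rewrite big_nil.
  rewrite (_ : (fun w => _) = fun w => maxe (f v w)%:E (\big[maxe/-oo%E]_(u <- s) (f u w)%:E)).
    exact: measurable_maxe (mf v) IH.
  by apply: funext => w; rewrite big_cons.
rewrite (ae_eq_integral (cst 1%E)) //; first by rewrite integral_cst // mul1e; exact: probability_setT.
have all_ae : \forall w \ae P, forall v, (f v w)%:E = (\1_(B v) w)%:E.
  by apply: filter_forall => v; apply: filterS (f_ae v) => w; apply.
apply: filterS2 all_ae someB => w eq_f [v0 Bv0] _ /=.
under eq_bigr do rewrite eq_f.
apply/eqP; rewrite eq_le; apply/andP; split.
  apply: bigmax_le => [|v _]; first by rewrite leNye.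
  by rewrite indicE lee_fin; case: (w \in B v) => /=; rewrite ?ler01 ?lexx.
by apply: le_trans (le_bigmax _ _ v0); rewrite indicE mem_set.
Qed.
Local Close Scope ring_scope.

Section EdgeEvents.
Variables (X : nat -> nat) (d : measure_display) (T : measurableType d).
Variables (xi : forall n, {set {set 'I_(X n.+1)}})
  (sig : forall n, T -> {perm 'I_(X n.+1)}) (tau : forall n, T -> {perm 'I_(X n)}).

Definition relabeled_graph (w : T) : edge_family X :=
  perm_edge (fun m => ld_edge (xi m) (sig m w)) (fun m => tau m w).

Definition edge_events : set (set T) :=
  [set A | exists n (a : 'I_(X n)) (b : 'I_(X n.+1)),
           A = [set w | perm_edge (fun m => ld_edge (xi m) (sig m w))
                                  (fun m => tau m w) a b]].

Local Notation TG := (g_sigma_algebraType edge_events).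

(* Each edge event is determined by (sig m, tau m, tau (m+1)), hence measurable. *)
Lemma edge_events_measurable :
  (forall n (p : {perm 'I_(X n.+1)}), measurable [set w | sig n w = p]) ->
  (forall n (q : {perm 'I_(X n)}), measurable [set w | tau n w = q]) ->
  edge_events `<=` measurable.
Proof.
move=> sig_meas tau_meas A [m [a [b ->]]].
apply: (@measurable_fibre _ T _ (fun w => (sig m w, tau m w, tau m.+1 w))
  (fun t => ld_edge (xi m) t.1.1 (t.1.2^-1%g a) (t.2^-1%g b))).
case=> [[p q] r].
have -> : [set w | (sig m w, tau m w, tau m.+1 w) = (p, q, r)] =
    [set w | sig m w = p] `&` [set w | tau m w = q] `&` [set w | tau m.+1 w = r].
  by apply/seteqP; split => w /=; [case=> -> -> -> | case=> -[-> ->] ->].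
by apply: measurableI; [apply: measurableI|].
Qed.

(* An edge slot ((m, a), (m+1, b)); a graph is a boolean function on slots. *)
Definition edge_slot : Type := {m : nat & ('I_(X m) * 'I_(X m.+1))%type}.

Definition slot_family (e : edge_slot -> bool) : edge_family X :=
  fun m a b => e (existT _ m (a, b)).

Definition slot_edges (w : T) (t : edge_slot) : bool :=
  relabeled_graph w (projT2 t).1 (projT2 t).2.

(* An event of sigma(E) that depends only on the slots of a finite list S is
   a finite boolean combination of edge events, hence lies in G. *)
Lemma measurable_finite_slots (S : seq edge_slot) :
  forall Psi : (edge_slot -> bool) -> bool,
  (forall e1 e2, {in S, e1 =1 e2} -> Psi e1 = Psi e2) ->
  measurable ([set w | Psi (slot_edges w)] : set TG).
Proof.
elim: S => [|t S IH] Psi local.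
  have const w : Psi (slot_edges w) = Psi (fun _ => false) by apply: local.
  case: (boolP (Psi (fun _ => false))) => Psi0.
    by rewrite (_ : [set w | _] = setT); [exact: measurableT | apply/seteqP; split => w //= _; rewrite const].
  rewrite (_ : [set w | _] = set0); first exact: measurable0.
  by apply/seteqP; split => w //=; rewrite const (negbTE Psi0).
pose Psi_at b e := Psi (fun t' => if t' == t then b else e t').
have Psi_atE w : Psi (slot_edges w) = Psi_at (slot_edges w t) (slot_edges w).
  by apply: local => t' _; case: eqP => // ->.
have local_at b : forall e1 e2, {in S, e1 =1 e2} -> Psi_at b e1 = Psi_at b e2.
  move=> e1 e2 e12; apply: local => t' /predU1P[-> | t'S]; first by rewrite eqxx.
  by case: eqP => // _; exact: e12.
have mt : measurable ([set w | slot_edges w t] : set TG).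
  by apply: sub_gen_smallest; exists (projT1 t), (projT2 t).1, (projT2 t).2.
have -> : [set w | Psi (slot_edges w)] =
   ([set w | slot_edges w t] `&` [set w | Psi_at true (slot_edges w)]) `|`
   (~` [set w | slot_edges w t] `&` [set w | Psi_at false (slot_edges w)]).
  apply/seteqP; split => w /=; rewrite Psi_atE.
    by case: (slot_edges w t) => h; [left | right]; split.
  by case=> -[st Pst]; [rewrite st | move/negP/negbTE: st => ->].
apply: measurableU; apply: measurableI => //.
- exact: IH (local_at true).
- exact: measurableC.
- exact: IH (local_at false).
Qed.

Definition slots_below (M : nat) : seq edge_slot :=
  flatten [seq [seq (existT _ m (a, b) : edge_slot) | a <- enum 'I_(X m), b <- enum 'I_(X m.+1)]
          | m <- iota 0 M].

Lemma mem_slots_below M m (a : 'I_(X m)) (b : 'I_(X m.+1)) : m < M ->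
  (existT _ m (a, b) : edge_slot) \in slots_below M.
Proof.
move=> lt_mM; apply/flattenP.
exists [seq (existT _ m (a, b) : edge_slot) | a <- enum 'I_(X m), b <- enum 'I_(X m.+1)].
  by apply/mapP; exists m; rewrite // mem_iota.
by apply/allpairsP; exists (a, b); rewrite !mem_enum.
Qed.

Lemma measurable_local_event (Phi : edge_family X -> bool) M :
  (forall E1 E2 : edge_family X,
     (forall m, m < M -> forall a b, @E1 m a b = @E2 m a b) -> Phi E1 = Phi E2) ->
  measurable ([set w | Phi (relabeled_graph w)] : set TG).
Proof.
move=> local.
apply: (measurable_finite_slots (S := slots_below M) (Psi := fun e => Phi (slot_family e))).
move=> e1 e2 e12; apply: local => m lt_mM a b; exact: e12 (mem_slots_below a b lt_mM).
Qed.

Variables (n : nat) (i : 'I_(X n)).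

Definition identified_event (v : 'I_(X n)) : set T :=
  \bigcup_dd [set w | one_survivor (relabeled_graph w) dd n &&
                      (graph_rank (relabeled_graph w) dd v == val i)].

Definition resolved_event : set T :=
  \bigcup_dd [set w | one_survivor (relabeled_graph w) dd n].

Lemma identified_event_measurable v : measurable (identified_event v : set TG).
Proof.
apply: bigcupT_measurable => dd.
apply: (measurable_local_event
  (Phi := fun E => one_survivor E dd n && (graph_rank E dd v == val i)) (M := dd + n)).
by move=> E1 E2 agree; rewrite (one_survivor_local agree) // (graph_rank_local agree).
Qed.

Lemma resolved_event_measurable : measurable (resolved_event : set TG).
Proof.
apply: bigcupT_measurable => dd.
apply: (measurable_local_event (Phi := fun E => one_survivor E dd n) (M := dd + n)).
by move=> E1 E2 agree; rewrite (one_survivor_local agree).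
Qed.

Lemma label_event_measurable v :
  (forall q : {perm 'I_(X n)}, measurable [set w | tau n w = q]) ->
  measurable [set w | tau n w i = v].
Proof.
move=> tau_meas; rewrite (_ : [set w | _] = [set w | tau n w i == v]).
  exact: (@measurable_fibre _ T _ (tau n) (fun q => q i == v) tau_meas).
by apply/seteqP; split => w /eqP.
Qed.

Lemma fixation_resolved w :
  fixation (fun m => ld_edge (xi m) (sig m w)) -> resolved_event w.
Proof.
case/(_ n) => dd [_ [v dead]]; exists dd => //=.
rewrite one_survivor_perm; apply/existsP; exists v; apply/forallP => u.
by apply/implyP => uv; rewrite -alive_desc dead // eqxx.
Qed.

Hypothesis xi_part : forall m, finset.partition (xi m) [set: 'I_(X m.+1)].
Hypothesis many_blocks : forall m (p : {perm 'I_(X m.+1)}), X m <= #|Xi (xi m) p|.+1.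

Lemma identified_label v : identified_event v `<=` [set w | tau n w i = v].
Proof.
move=> w [dd _ /= /andP[]]; rewrite one_survivor_perm graph_rank_perm => resolved.
rewrite (graph_rank_correct xi_part (fun m => many_blocks (sig m w)) _ resolved).
by move=> /eqP /val_inj <-; rewrite permKV.
Qed.

Lemma label_identified v :
  [set w | tau n w i = v] `&` resolved_event `<=` identified_event v.
Proof.
move=> w [/= label [dd _ /= resolved]]; exists dd => //=; rewrite resolved /=.
move: resolved; rewrite one_survivor_perm graph_rank_perm => resolved.
by rewrite (graph_rank_correct xi_part (fun m => many_blocks (sig m w)) _ resolved) -label permK.
Qed.

End EdgeEvents.

Local Open Scope ring_scope.

Theorem proposition2p3
  (X : nat -> nat) (X_pos : forall n, (0 < X n)%N)
  (k : forall n, 'I_(X n) -> nat)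
  (k_sum : forall n, (\sum_(i < X n) k n i)%N = X n.+1)
  (xi : forall n, {set {set 'I_(X n.+1)}})
  (xi_part : forall n, finset.partition (xi n) [set: 'I_(X n.+1)]%SET)
  (xi_sizes : forall n, perm_eq [seq #|A| | A : {set 'I_(X n.+1)} <- enum (xi n)]
                          [seq m <- [seq k n i | i <- enum 'I_(X n)] | m != 0%N])
  (d : measure_display) (T : measurableType d) (R : realType)
  (P : probability T R)
  (sig : forall n, T -> {perm 'I_(X n.+1)})
  (tau : forall n, T -> {perm 'I_(X n)})
  (sig_meas : forall n (p : {perm 'I_(X n.+1)}), measurable [set w | sig n w = p])
  (tau_meas : forall n (q : {perm 'I_(X n)}), measurable [set w | tau n w = q])
  (law : forall (N : nat) (p : forall n, {perm 'I_(X n.+1)})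
                (q : forall n, {perm 'I_(X n)}),
      P [set w | forall n, (n < N)%N -> sig n w = p n /\ tau n w = q n] =
      (\prod_(n < N) ((X n.+1)`!%:R^-1 * (X n)`!%:R^-1) : R)%:E)
  (hyp_i : forall n, (#|[set i : 'I_(X n) | k n i == 0%N]%SET| <= 1)%N)
  (hyp_ii : {ae P, forall w,
       fixation (fun m => ld_edge (xi m) (sig m w))}) :
  let G : set (set T) :=
    <<s [set A | exists n (a : 'I_(X n)) (b : 'I_(X n.+1)),
           A = [set w | perm_edge (fun m => ld_edge (xi m) (sig m w))
                                  (fun m => tau m w) a b]] >> in
  forall (n : nat) (i : 'I_(X n)),
    (exists f : 'I_(X n) -> T -> R,
       forall v, cond_prob_version P G [set w | tau n w i = v] (f v)) /\
    (forall f : 'I_(X n) -> T -> R,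
       (forall v, cond_prob_version P G [set w | tau n w i = v] (f v)) ->
       (\int[P]_w (\big[maxe/-oo]_(v < X n) (f v w)%:E) = 1)%E).
Proof.
move=> G n i.
have many_blocks m (p : {perm 'I_(X m.+1)}) : (X m <= #|Xi (xi m) p|.+1)%N.
  exact: card_blocks_lower (xi_sizes m) (hyp_i m).
have gen_meas := edge_events_measurable (xi := xi) sig_meas tau_meas.
have G_meas : G `<=` measurable by move=> C GC; apply: (generated_measurable gen_meas); exact: GC.
pose A v := [set w | tau n w i = v].
pose B v := identified_event xi sig tau i v.
pose M := resolved_event xi sig tau n.
have GB v : G (B v) by exact: identified_event_measurable.
have GM : G M by exact: resolved_event_measurable.
have resolved_ae : \forall w \ae P, M w.
  exact: filterS (@fixation_resolved _ _ _ xi sig tau n) hyp_ii.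
have B_sub_A v : B v `<=` A v by exact: identified_label.
have AM_sub_B v : A v `&` M `<=` B v by exact: label_identified.
(* the graph identifies the label of (n, i) almost surely, so the indicator
   of B v is a version of P(A v | G) *)
have versionB v : cond_prob_version P G (A v) (\1_(B v)).
  apply: (indic_cond_prob_version gen_meas (GB v)) => C GC.
  apply: measure_inter_eq (B_sub_A v) (AM_sub_B v) resolved_ae.
  - exact: label_event_measurable (tau_meas n).
  - exact: G_meas _ (GB v).
  - exact: G_meas _ GM.
  - exact: G_meas _ GC.
split; first by exists (fun v => \1_(B v)).
move=> f versionf; apply: (integral_bigmax_indic (B := B)).
- by move=> v; exact: cond_prob_version_measurableT (versionf v).
- by move=> v; exact: cond_prob_version_ae_eq (versionf v) (versionB v).
- by apply: filterS resolved_ae => w Mw; exists (tau n w i); exact: AM_sub_B.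
Qed.
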